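(* Let $G=(V,E,c_V^G,c_E^G)$ and $H=(V,E,c_V^H,c_E^H)$ be two capacitated graphs on the same graph $(V,E)$ that differ only in the capacity of one vertex $s$ (all other vertex capacities and all edge capacities coincide). Assume that in the executions of Rising-Tide on $G$ and on $H$ no two vertices become saturated simultaneously, and that the dependency graphs coincide, $D_G=D_H$. Let $\mu_G,\mu_H$ be the outputs of Rising-Tide on $G$ and $H$. Then \[\sum_i\left|\Big(c_V^G(i)-\sum_j\mu_G(i,j)\Big)-\Big(c_V^H(i)-\sum_j\mu_H(i,j)\Big)\right|\le|c_V^G(s)-c_V^H(s)|.\]
   Context: Capacitated graphs have nonnegative vertex capacities $c_V$ and edge capacities $c_E$; edges may include self-loops, and in $\sum_j\mu(i,j)$ a self-loop at $i$ counts once. A feasible fractional matching $\mu:E\to\mathbb{R}_{\ge0}$ satisfies $\mu(e)\le c_E(e)$ and $\sum_j\mu(i,j)\le c_V(i)$. Vertex $i$ is saturated if $\sum_j\mu(i,j)=c_V(i)$; edge $e$ is saturated if $\mu(e)=c_E(e)$. Rising-Tide: set $E'=\{e\in E:c_E(e)>0\}$ and $\mu\equiv0$; while $E'\ne\emptyset$: choose the maximum $\delta\ge0$ such that $\mu+\delta\mathbf{1}_{E'}$ is feasible, set $\mu\gets\mu+\delta\mathbf{1}_{E'}$, and remove from $E'$ every edge $(i,j)$ such that $i$, $j$, or $(i,j)$ is saturated; return $\mu$. Dependency graph $D_G$: the directed graph on $V$ which, for each edge $(i,j)\in E$, contains $j\to i$ if $i$ is saturated at the moment $(i,j)$ is removed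 from $E'$ in the execution on $G$, and contains $i\to j$ if $j$ is saturated at that moment. *)

From HB Require Import structures.
From mathcomp Require Import all_boot all_order all_algebra.
Set Implicit Arguments. Unset Strict Implicit. Unset Printing Implicit Defensive.
Import Order.TTheory GRing.Theory Num.Theory.
Local Open Scope ring_scope.

(* A capacitated graph on a finite vertex type V:
   - the edge set is a symmetric relation [E : rel V] (E i i = self-loop at i);
   - vertex capacities [cV : V -> R], edge capacities [cE : V -> V -> R]
     (symmetric, only meaningful on edges).
   A fractional matching is a (symmetric) function [mu : V -> V -> R],
   only meaningful on edges.  The load of i is \sum_{j : E i j} mu i j;
   a self-loop at i occurs once in this sum. *)

Section RisingTide.
Variables (R : realFieldType) (V : finType) (E : rel V)
          (cV : V -> R) (cE : V -> V -> R).

Definition load (mu : V -> V -> R) (i : V) : R := \sum_(j | E i j) mu i j.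

Definition feasible (mu : V -> V -> R) : Prop :=
  (forall i j, E i j -> 0 <= mu i j /\ mu i j <= cE i j) /\
  (forall i, load mu i <= cV i).

Definition vsat (mu : V -> V -> R) (i : V) : bool := load mu i == cV i.
Definition esat (mu : V -> V -> R) (i j : V) : bool := mu i j == cE i j.

(* mu + d * 1_{Ep}; Ep is a (symmetric) set of ordered pairs of endpoints *)
Definition incr (mu : V -> V -> R) (d : R) (Ep : {set V * V}) : V -> V -> R :=
  fun i j => mu i j + (if (i, j) \in Ep then d else 0).

Definition is_max_delta (mu : V -> V -> R) (Ep : {set V * V}) (d : R) : Prop :=
  0 <= d /\ feasible (incr mu d Ep) /\
  forall d', 0 <= d' -> feasible (incr mu d' Ep) -> d' <= d.

Definition initial_edges : {set V * V} :=
  [set p | E p.1 p.2 && (0 < cE p.1 p.2)].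

Definition surviving (mu' : V -> V -> R) (Ep : {set V * V}) : {set V * V} :=
  [set p in Ep | ~~ [|| vsat mu' p.1, vsat mu' p.2 | esat mu' p.1 p.2]].

(* A complete execution of Rising-Tide with n iterations:
   Ep k = E' before iteration k, mu k = mu before iteration k. *)
Definition rising_tide_run (n : nat) (Ep : nat -> {set V * V})
    (mu : nat -> V -> V -> R) : Prop :=
  Ep 0%N = initial_edges /\ mu 0%N = (fun _ _ => 0) /\
  (forall k, (k < n)%N ->
     Ep k != set0 /\
     exists d, is_max_delta (mu k) (Ep k) d /\
               mu k.+1 = incr (mu k) d (Ep k) /\
               Ep k.+1 = surviving (mu k.+1) (Ep k)) /\
  Ep n = set0.

Definition no_simultaneous_saturation (n : nat) (mu : nat -> V -> V -> R) : Prop :=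
  forall k, (k < n)%N ->
    (#|[set v | vsat (mu k.+1) v && ~~ vsat (mu k) v]| <= 1)%N.

Definition dep_arc (n : nat) (Ep : nat -> {set V * V})
    (mu : nat -> V -> V -> R) (u v : V) : Prop :=
  exists k, (k < n)%N /\ exists i j,
    (i, j) \in Ep k /\ (i, j) \notin Ep k.+1 /\
    ((u = j /\ v = i /\ vsat (mu k.+1) i) \/
     (u = i /\ v = j /\ vsat (mu k.+1) j)).

End RisingTide.

(* At termination every edge (i, j) has left E' either because it saturated, so that
   mu(i, j) = c_E(i, j) in both runs, or because an endpoint v saturated, which makes it
   an arc u -> v of the dependency graph.  All arcs into v leave E' in the iteration in
   which v saturates, and all edges still in E' carry the same flow, so the arcs into v
   share a final flow t(v).  Since D_G = D_H, the two final matchings differ only by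
   t_G(v) - t_H(v) on the arcs into v.  A vertex with an incoming arc is saturated in
   both runs, so its residual difference vanishes and its in-arcs absorb the change of
   its load; the load change through its out-arcs is charged to their heads.  Summing
   over all vertices, each out-arc term is paid for by the in-arc term at its head,
   and only |c^G(s) - c^H(s)| remains. *)

From mathcomp Require Import all_boot all_order all_algebra.
From mathcomp Require Import ring lra.
Import Order.TTheory GRing.Theory Num.Theory.
Local Open Scope ring_scope.
Set Implicit Arguments. Unset Strict Implicit. Unset Printing Implicit Defensive.

Section RisingTideRun.
Variables (R : realFieldType) (V : finType) (E : rel V)
          (cV : V -> R) (cE : V -> V -> R).
Hypotheses (symE : forall i j, E i j = E j i)
           (symcE : forall i j, cE i j = cE j i)
           (cE_ge0 : forall i j, E i j -> 0 <= cE i j).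
Variables (n : nat) (Ep : nat -> {set V * V}) (mu : nat -> V -> V -> R).
Hypothesis run : rising_tide_run E cV cE n Ep mu.

Lemma run_step k : (k < n)%N ->
  exists2 d, 0 <= d & [/\ feasible E cV cE (mu k.+1),
    mu k.+1 = incr (mu k) d (Ep k) & Ep k.+1 = surviving E cV cE (mu k.+1) (Ep k)].
Proof.
move=> lt_kn; case: run => _ [_ [step _]].
have [_ [d [[d_ge0 [feas _]] [mu_next Ep_next]]]] := step k lt_kn.
by exists d => //; split => //; rewrite mu_next.
Qed.

Lemma Ep_subS k : (k < n)%N -> Ep k.+1 \subset Ep k.
Proof.
by case/run_step=> d _ [_ _ ->]; apply/subsetP => p; rewrite inE => /andP[].
Qed.

Lemma Ep_sub m m' : (m <= m')%N -> (m' <= n)%N -> Ep m' \subset Ep m.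
Proof.
elim: m' => [|m' IH]; first by rewrite leqn0 => /eqP ->.
rewrite leq_eqVlt ltnS => /predU1P[-> //|le_mm' lt_m'n].
exact: subset_trans (Ep_subS lt_m'n) (IH le_mm' (ltnW lt_m'n)).
Qed.

Lemma mu_frozen m m' p : p \notin Ep m -> (m <= m')%N -> (m' <= n)%N ->
  mu m' p.1 p.2 = mu m p.1 p.2.
Proof.
move=> p_out; elim: m' => [|m' IH]; first by rewrite leqn0 => /eqP ->.
rewrite leq_eqVlt ltnS => /predU1P[-> //|le_mm' lt_m'n].
have [d _ [_ -> _]] := run_step lt_m'n.
have p_out' : p \notin Ep m'.
  exact: contra (subsetP (Ep_sub le_mm' (ltnW lt_m'n)) p) p_out.
by rewrite /incr -surjective_pairing (negbTE p_out') addr0 IH // ltnW.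
Qed.

Lemma mu_Ep_sym m : (m <= n)%N ->
  (forall i j, mu m i j = mu m j i) /\
  (forall i j, ((i, j) \in Ep m) = ((j, i) \in Ep m)).
Proof.
case: run => Ep0 [mu0 _]; elim: m => [|m IH] lt_mn.
  by rewrite Ep0 mu0; split=> // i j; rewrite !inE /= symE symcE.
have [mu_sym Ep_sym] := IH (ltnW lt_mn).
have [d _ [_ mu_next Ep_next]] := run_step lt_mn.
have mu'_sym i j : mu m.+1 i j = mu m.+1 j i by rewrite mu_next /incr mu_sym Ep_sym.
split=> // i j; rewrite Ep_next !inE /= Ep_sym /esat mu'_sym symcE.
by case: (vsat _ _ _ i); case: (vsat _ _ _ j).
Qed.

Lemma mu_Ep_const m p q : (m <= n)%N -> p \in Ep m -> q \in Ep m ->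
  mu m p.1 p.2 = mu m q.1 q.2.
Proof.
case: run => _ [mu0 _]; elim: m => [|m IH] lt_mn; first by rewrite mu0.
have [d _ [_ -> _]] := run_step lt_mn.
move=> /(subsetP (Ep_subS lt_mn)) p_in /(subsetP (Ep_subS lt_mn)) q_in.
by rewrite /incr -!surjective_pairing p_in q_in (IH (ltnW lt_mn)).
Qed.

Lemma load_mono m m' i : (m <= m')%N -> (m' <= n)%N ->
  load E (mu m) i <= load E (mu m') i.
Proof.
elim: m' => [|m' IH]; first by rewrite leqn0 => /eqP ->.
rewrite leq_eqVlt ltnS => /predU1P[-> //|le_mm' lt_m'n].
apply: le_trans (IH le_mm' (ltnW lt_m'n)) _; apply: ler_sum => j _.
have [d d_ge0 [_ -> _]] := run_step lt_m'n.
by rewrite /incr lerDl; case: ifP.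
Qed.

Lemma Ep_leaves p : p \in Ep 0 ->
  exists2 k, (k < n)%N & p \in Ep k /\ p \notin Ep k.+1.
Proof.
case: run => _ [_ [_ Epn]] p_in0.
have p_outn : p \notin Ep n by rewrite Epn inE.
have [[|k] p_out min_k] := ex_minnP (ex_intro (fun m => p \notin Ep m) n p_outn).
  by rewrite p_in0 in p_out.
exists k; first exact: min_k.
by split=> //; apply: contraT => /min_k; rewrite ltnn.
Qed.

Lemma Ep_unsat k p : (k < n)%N -> p \in Ep k.+1 ->
  ~~ vsat E cV (mu k.+1) p.1 && ~~ vsat E cV (mu k.+1) p.2.
Proof.
by case/run_step=> d _ [_ _ ->]; rewrite inE !negb_or => /and3P[_ -> /andP[-> _]].
Qed.

Lemma vsat_final k i : (k < n)%N -> vsat E cV (mu k.+1) i -> load E (mu n) i = cV i.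
Proof.
move=> lt_kn /eqP sat; apply/le_anti/andP; split; last by rewrite -sat load_mono.
case: n run_step lt_kn => // n' step _.
by have [d _ [[_ feas] _ _]] := step n' (ltnSn n').
Qed.

Definition dep_arcb (u v : V) : bool :=
  [exists k : 'I_n, [exists i, [exists j,
    [&& (i, j) \in Ep k, (i, j) \notin Ep k.+1 &
        [&& u == j, v == i & vsat E cV (mu k.+1) i] ||
        [&& u == i, v == j & vsat E cV (mu k.+1) j]]]]].

Lemma dep_arcP u v : reflect (dep_arc E cV n Ep mu u v) (dep_arcb u v).
Proof.
apply: (iffP existsP) => [[k /existsP[i /existsP[j]]]|].
  case/and3P=> p_in p_out sat; exists k; split=> //; exists i, j; do 2 split=> //.
  by case/orP: sat => /and3P[/eqP-> /eqP-> sat]; [left|right].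
case=> k [lt_kn [i [j [p_in [p_out sat]]]]].
exists (Ordinal lt_kn); apply/existsP; exists i; apply/existsP; exists j.
by rewrite /= p_in p_out; case: sat => [[-> [-> ->]]|[-> [-> ->]]]; rewrite !eqxx ?orbT.
Qed.

Lemma dep_arc_removed u v : dep_arc E cV n Ep mu u v ->
  exists2 k, (k < n)%N & exists2 p, p \in Ep k /\ p \notin Ep k.+1 &
    (p = (v, u) \/ p = (u, v)) /\ vsat E cV (mu k.+1) v.
Proof.
case=> k [lt_kn [i [j [p_in [p_out sat]]]]]; exists k => //; exists (i, j) => //.
by case: sat => [[-> [-> sat]]|[-> [-> sat]]]; split; auto.
Qed.

Lemma dep_arc_vsat u v : dep_arc E cV n Ep mu u v -> load E (mu n) v = cV v.
Proof. by case/dep_arc_removed=> k lt_kn [p _ [_ sat]]; apply: vsat_final sat. Qed.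

Lemma incident_notin_Ep k m v p : (k < m)%N -> (m <= n)%N ->
  vsat E cV (mu k.+1) v -> p.1 = v \/ p.2 = v -> p \notin Ep m.
Proof.
move=> lt_km le_mn sat p_v; apply: contraTN sat => /(subsetP (Ep_sub lt_km le_mn)).
by move=> /(Ep_unsat (leq_trans lt_km le_mn))/andP[]; case: p_v => <-.
Qed.

Lemma dep_arc_same_flow u u' v :
  dep_arc E cV n Ep mu u v -> dep_arc E cV n Ep mu u' v -> mu n v u = mu n v u'.
Proof.
move=> /dep_arc_removed[k lt_kn [p [p_in p_out] [p_v sat]]].
move=> /dep_arc_removed[k' lt_k'n [p' [p'_in p'_out] [p'_v sat']]].
have incident w q : q = (v, w) \/ q = (w, v) -> q.1 = v \/ q.2 = v.
  by case=> ->; [left|right].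
have eq_k'k : k' = k.
  case: (ltngtP k k') => // [lt_kk'|lt_k'k].
    have := incident_notin_Ep lt_kk' (ltnW lt_k'n) sat (incident _ _ p'_v).
    by rewrite p'_in.
  have := incident_notin_Ep lt_k'k (ltnW lt_kn) sat' (incident _ _ p_v).
  by rewrite p_in.
subst k'.
have [mu_sym _] := mu_Ep_sym (leqnn n).
have -> : mu n v u = mu n p.1 p.2 by case: p_v => ->; rewrite //= mu_sym.
have -> : mu n v u' = mu n p'.1 p'.2 by case: p'_v => ->; rewrite //= mu_sym.
rewrite (mu_frozen p_out lt_kn (leqnn n)) (mu_frozen p'_out lt_kn (leqnn n)).
have [d _ [_ -> _]] := run_step lt_kn.
by rewrite /incr -!surjective_pairing p_in p'_in (mu_Ep_const (ltnW lt_kn) p_in p'_in).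
Qed.

Lemma mu_no_dep_arc i j : E i j ->
  ~ dep_arc E cV n Ep mu j i -> ~ dep_arc E cV n Ep mu i j -> mu n i j = cE i j.
Proof.
move=> Eij no_ji no_ij; case: run => Ep0 [mu0 _].
have [p_in0|p_out0] := boolP ((i, j) \in Ep 0); last first.
  rewrite (mu_frozen (p := (i, j)) p_out0 (leq0n n) (leqnn n)) mu0.
  move: p_out0; rewrite Ep0 inE /= Eij -leNgt => cE_le0.
  by apply/le_anti; rewrite cE_le0 cE_ge0.
have [k lt_kn [p_in p_out]] := Ep_leaves p_in0.
have [d _ [_ _ Ep_next]] := run_step lt_kn.
move: (p_out); rewrite Ep_next inE p_in /= negbK => /or3P[sat|sat|/eqP sat].
- by case: no_ji; exists k; split=> //; exists i, j; do 2 split=> //; left.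
- by case: no_ij; exists k; split=> //; exists i, j; do 2 split=> //; right.
- by rewrite (mu_frozen (p := (i, j)) p_out lt_kn (leqnn n)).
Qed.

Definition arc_flow (v : V) : R :=
  if [pick u | dep_arcb u v] is Some u then mu n v u else 0.

Lemma mu_dep_arc u v : dep_arc E cV n Ep mu u v -> mu n v u = arc_flow v.
Proof.
move=> arc_uv; rewrite /arc_flow; case: pickP => [u' /dep_arcP arc_u'v|no_arc].
  exact: dep_arc_same_flow.
by have /dep_arcP := arc_uv; rewrite no_arc.
Qed.

End RisingTideRun.

Section ResidualAccounting.
Variables (R : realFieldType) (V : finType) (E arc : rel V) (s : V).
Variables (cG cH tG tH : V -> R) (mG mH : V -> V -> R).
Hypotheses (symE : forall i j, E i j = E j i)
  (cV_other : forall i, i != s -> cG i = cH i)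
  (mG_sym : forall i j, mG i j = mG j i) (mH_sym : forall i j, mH i j = mH j i)
  (mG_arc : forall i j, arc j i -> mG i j = tG i)
  (mH_arc : forall i j, arc j i -> mH i j = tH i)
  (m_no_arc : forall i j, E i j -> ~~ arc j i -> ~~ arc i j -> mG i j = mH i j)
  (G_arc_sat : forall i j, E i j -> arc j i -> load E mG i = cG i)
  (H_arc_sat : forall i j, E i j -> arc j i -> load E mH i = cH i).

Local Notation dt i := (tG i - tH i).
Local Notation residual_diff i := ((cG i - load E mG i) - (cH i - load E mH i)).

Lemma load_diff_arcs i : load E mG i - load E mH i =
  \sum_(j | E i j && arc j i) dt i + \sum_(j | E i j && ~~ arc j i && arc i j) dt j.
Proof.
rewrite /load -sumrB (bigID (fun j => arc j i)) /=.
rewrite [X in _ + X](bigID (fun j => arc i j)) /= [X in _ + (_ + X)]big1 ?addr0.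
- congr (_ + _); apply: eq_bigr => j /andP[_ arc_ji].
    by rewrite mG_arc // mH_arc.
  by rewrite mG_sym mH_sym mG_arc // mH_arc.
- by move=> j /andP[/andP[Eij no_ji] no_ij]; rewrite m_no_arc ?subrr.
Qed.

Lemma residual_diff_in_arcs i :
  residual_diff i = 0 \/ \sum_(j | E i j && arc j i) dt i = 0.
Proof.
case: (pickP (fun j => E i j && arc j i)) => [j /andP[Eij arc_ji]|no_in].
  by left; rewrite (G_arc_sat Eij arc_ji) (H_arc_sat Eij arc_ji) !subrr.
by right; apply: big_pred0.
Qed.

Lemma residual_diff_le i :
  `|residual_diff i| + \sum_(j | E i j && arc j i) `|dt i| <=
  `|cG i - cH i| + \sum_(j | E i j && ~~ arc j i && arc i j) `|dt j|.
Proof.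
have -> : `|residual_diff i| + \sum_(j | E i j && arc j i) `|dt i| =
          `|residual_diff i + \sum_(j | E i j && arc j i) dt i|.
  have -> : \sum_(j | E i j && arc j i) `|dt i| = `|\sum_(j | E i j && arc j i) dt i|.
    by rewrite !sumr_const normrMn.
  by case: (residual_diff_in_arcs i) => ->; rewrite normr0 ?add0r ?addr0.
have -> : residual_diff i + \sum_(j | E i j && arc j i) dt i =
          (cG i - cH i) - \sum_(j | E i j && ~~ arc j i && arc i j) dt j.
  have -> : residual_diff i = (cG i - cH i) - (load E mG i - load E mH i) by ring.
  by rewrite load_diff_arcs; ring.
by apply: le_trans (ler_normB _ _) _; rewrite lerD2l ler_norm_sum.
Qed.

Lemma sum_out_arcs_le :
  \sum_i \sum_(j | E i j && ~~ arc j i && arc i j) `|dt j| <=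
  \sum_i \sum_(j | E i j && arc j i) `|dt i|.
Proof.
rewrite [X in _ <= X](exchange_big_dep xpredT) //=.
under [X in _ <= X]eq_bigr => i _ do under eq_bigl => j do rewrite symE.
apply: ler_sum => i _; rewrite [X in X <= _]big_mkcond [X in _ <= X]big_mkcond.
by apply: ler_sum => j _; case: (E i j); case: (arc j i); case: (arc i j); rewrite /= ?lexx.
Qed.

Lemma residual_sum_le : \sum_i `|residual_diff i| <= `|cG s - cH s|.
Proof.
have dc_sum : \sum_i `|cG i - cH i| = `|cG s - cH s|.
  by rewrite (bigD1 s) //= big1 ?addr0 // => i /cV_other->; rewrite subrr normr0.
have := ler_sum (index_enum V) (fun i (_ : true) => residual_diff_le i).
rewrite !big_split /= dc_sum.
by have := sum_out_arcs_le; lra.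
Qed.

End ResidualAccounting.

Theorem lemma23 (R : realFieldType) (V : finType) (E : rel V)
    (cE : V -> V -> R) (cVG cVH : V -> R) (s : V)
    (symE : forall i j, E i j = E j i)
    (symcE : forall i j, cE i j = cE j i)
    (cE_ge0 : forall i j, E i j -> 0 <= cE i j)
    (cVG_ge0 : forall i, 0 <= cVG i) (cVH_ge0 : forall i, 0 <= cVH i)
    (cV_other : forall i, i != s -> cVG i = cVH i)
    (nG nH : nat) (EpG EpH : nat -> {set V * V})
    (muG muH : nat -> V -> V -> R)
    (runG : rising_tide_run E cVG cE nG EpG muG)
    (runH : rising_tide_run E cVH cE nH EpH muH)
    (nosimG : no_simultaneous_saturation E cVG nG muG)
    (nosimH : no_simultaneous_saturation E cVH nH muH)
    (sameD : forall u v, dep_arc E cVG nG EpG muG u v <-> dep_arc E cVH nH EpH muH u v) :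
  \sum_(i : V) `|(cVG i - load E (muG nG) i) - (cVH i - load E (muH nH) i)|
    <= `|cVG s - cVH s|.
Proof.
pose arc := dep_arcb E cVG nG EpG muG.
have arcG u v : arc u v -> dep_arc E cVG nG EpG muG u v by move/dep_arcP.
have arcH u v : arc u v -> dep_arc E cVH nH EpH muH u v by move/arcG/sameD.
have no_arcG u v : ~~ arc u v -> ~ dep_arc E cVG nG EpG muG u v by move/dep_arcP.
have no_arcH u v : ~~ arc u v -> ~ dep_arc E cVH nH EpH muH u v.
  by move=> /no_arcG + /sameD.
apply: (residual_sum_le (arc := arc) (tG := arc_flow E cVG nG EpG muG)
                        (tH := arc_flow E cVH nH EpH muH) symE cV_other).
- exact: (mu_Ep_sym symE symcE runG (leqnn nG)).1.
- exact: (mu_Ep_sym symE symcE runH (leqnn nH)).1.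
- by move=> i j /arcG/(mu_dep_arc symE symcE runG).
- by move=> i j /arcH/(mu_dep_arc symE symcE runH).
- move=> i j Eij no_ji no_ij.
  rewrite (mu_no_dep_arc cE_ge0 runG Eij (no_arcG _ _ no_ji) (no_arcG _ _ no_ij)).
  by rewrite (mu_no_dep_arc cE_ge0 runH Eij (no_arcH _ _ no_ji) (no_arcH _ _ no_ij)).
- by move=> i j _ /arcG/(dep_arc_vsat runG).
- by move=> i j _ /arcH/(dep_arc_vsat runH).
Qed.
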